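(* Let $G$ be a cograph and let $\sigma$ be a greedy coloring of $G$ with color set $\{1,2,\dots,\chi(G)\}$ ordered naturally. Let $G_1=(V_1,E_1)$ be a connected component of $G$. Then $\sigma(V_1)=\{1,\dots,\chi(G_1)\}$.
   Context: All graphs are finite, simple and undirected; $\chi(G)$ is the chromatic number. A cograph is a graph that is $K_1$, or a disjoint union of cographs, or a join of cographs. A greedy coloring of $G$ with ordered color set $1<2<\dots$ is obtained by processing the vertices of $G$ in some order and assigning to each vertex the smallest color not already assigned to one of its previously processed neighbors. (For cographs, every greedy coloring uses exactly $\chi(G)$ colors.) *)

From mathcomp Require Import all_boot.
Set Implicit Arguments. Unset Strict Implicit. Unset Printing Implicit Defensive.

Section Graphs.
Variable T : finType.

Definition simple_graph (e : rel T) := symmetric e /\ irreflexive e.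

Inductive cograph_on (e : rel T) : {set T} -> Prop :=
| cg_single x : cograph_on e [set x]
| cg_union (A B : {set T}) :
    A != set0 -> B != set0 -> [disjoint A & B] ->
    cograph_on e A -> cograph_on e B ->
    (forall x y, x \in A -> y \in B -> ~~ e x y) ->
    cograph_on e (A :|: B)
| cg_join (A B : {set T}) :
    A != set0 -> B != set0 -> [disjoint A & B] ->
    cograph_on e A -> cograph_on e B ->
    (forall x y, x \in A -> y \in B -> e x y) ->
    cograph_on e (A :|: B).

Definition cograph (e : rel T) := cograph_on e [set: T].

Definition colorable_on (e : rel T) (S : {set T}) (k : nat) : bool :=
  [exists f : {ffun T -> 'I_k},
     [forall x in S, forall y in S, e x y ==> (f x != f y)]].

Lemma colorable_on_exists (e : rel T) (S : {set T}) :
  irreflexive e -> exists k, colorable_on e S k.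
Proof.
move=> irr; exists #|T|; apply/existsP; exists [ffun x => enum_rank x].
apply/forallP => x; apply/implyP => _; apply/forallP => y; apply/implyP => _.
apply/implyP => exy; rewrite !ffunE; apply/negP => /eqP /enum_rank_inj exy'.
by move: exy; rewrite exy' irr.
Qed.

Definition chi_on (e : rel T) (irr : irreflexive e) (S : {set T}) : nat :=
  ex_minn (colorable_on_exists S irr).

Definition component (e : rel T) (x : T) : {set T} := [set y | connect e x y].

Definition greedy_coloring (e : rel T) (sigma : T -> nat) : Prop :=
  exists s : seq T, uniq s /\ (forall v, v \in s) /\
    forall v, let N := [seq sigma u | u <- s & (index u s < index v s) && e u v] in
      [/\ 0 < sigma v, sigma v \notin N &
          forall c, 0 < c < sigma v -> c \in N].

End Graphs.

(** A greedy coloring restricted to a connected component [V] is proper and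
    "greedy-like": a vertex of color [k] sees every smaller color of [V]
    among its neighbours.  Hence the colors used on [V] are exactly
    [1 .. k] where [k] is the largest one, and it suffices to show that a
    greedy-like coloring of a cograph uses at most [chi] colors.  This goes
    by induction on the cograph: in a disjoint union [A + B] a vertex of
    maximal color sees all colors, so they all occur in its side, say [A],
    and [chi A <= chi (A + B)]; in a join [A * B] no color occurs on both
    sides, the restrictions to [A] and [B] stay greedy-like, and
    [chi A + chi B <= chi (A * B)]. *)

From mathcomp Require Import all_boot.
Set Implicit Arguments. Unset Strict Implicit. Unset Printing Implicit Defensive.

Section Cographs.
Variables (T : finType) (e : rel T).
Hypotheses (e_sym : symmetric e) (e_irr : irreflexive e).

Implicit Types (S A B : {set T}) (g : T -> nat).

Local Notation chi := (chi_on e_irr).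

Definition proper_on (g : T -> nat) (S : {set T}) :=
  {in S &, forall x y, e x y -> g x != g y}.

Definition colors (g : T -> nat) (S : {set T}) := undup [seq g x | x in S].

Lemma colorsP g S c : reflect (exists2 x, x \in S & g x = c) (c \in colors g S).
Proof.
by rewrite mem_undup; apply: (iffP imageP) => -[x xS cx]; exists x.
Qed.

Lemma uniq_colors g S : uniq (colors g S).
Proof. exact: undup_uniq. Qed.

Lemma colorable_on_proper g S n : S != set0 -> proper_on g S ->
  {in S, forall x, g x < n} -> colorable_on e S n.
Proof.
case/set0Pn=> x0 x0S gP ltn; case: n ltn => [|n] ltn; first by have := ltn _ x0S.
apply/existsP; exists [ffun x => inord (g x) : 'I_n.+1].
apply/forallP=> x; apply/implyP=> xS; apply/forallP=> y; apply/implyP=> yS.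
apply/implyP=> exy; rewrite !ffunE; apply: contra (gP x y xS yS exy) => /eqP.
by move/(congr1 val); rewrite /= !inordK ?ltn // => ->.
Qed.

Lemma chi_on_min S n : colorable_on e S n -> chi S <= n.
Proof. by rewrite /chi_on; case: ex_minnP => m _; apply. Qed.

Lemma chi_on_coloring S :
  exists2 g, proper_on g S & {in S, forall x, g x < chi S}.
Proof.
rewrite /chi_on; case: ex_minnP => m /existsP [f /forallP fP] _.
exists (fun x => val (f x)) => [x y xS yS exy|x _]; last exact: ltn_ord.
by move: (fP x); rewrite xS => /forallP /(_ y); rewrite yS exy.
Qed.

Lemma chi_on_gt0 S : S != set0 -> 0 < chi S.
Proof.
case/set0Pn=> x _; rewrite /chi_on; case: ex_minnP => m /existsP [f _] _.
by case: m f => // f; case: (f x).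
Qed.

Lemma chi_on_le_colors g S : S != set0 -> proper_on g S ->
  chi S <= size (colors g S).
Proof.
move=> S0 gP.
have inC x : x \in S -> g x \in colors g S by move=> xS; apply/colorsP; exists x.
apply/chi_on_min/(colorable_on_proper (g := index^~ (colors g S) \o g)) => //.
- move=> x y xS yS exy /=; apply: contra (gP x y xS yS exy) => /eqP.
  by move/(index_inj 0 (inC x xS) (inC y yS)) ->.
- by move=> x /inC; rewrite /= index_mem.
Qed.

Lemma chi_on_subset S' S : S' != set0 -> S' \subset S -> chi S' <= chi S.
Proof.
move=> S'0 sS'S; have [g gP ltg] := chi_on_coloring S.
apply/chi_on_min/(colorable_on_proper (g := g)) => // [x y xS' yS'|x xS'].
  by apply: gP; apply: (subsetP sS'S).
by apply: ltg; apply: (subsetP sS'S).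
Qed.

Lemma chi_on_join A B : A != set0 -> B != set0 -> {in A & B, forall x y, e x y} ->
  chi A + chi B <= chi (A :|: B).
Proof.
move=> A0 B0 eAB; have [g gP ltg] := chi_on_coloring (A :|: B).
have gPA : proper_on g A by move=> x y xA yA; apply: gP; rewrite inE ?xA ?yA.
have gPB : proper_on g B by move=> x y xB yB; apply: gP; rewrite inE ?xB ?yB ?orbT.
apply: leq_trans (leq_add (chi_on_le_colors A0 gPA) (chi_on_le_colors B0 gPB)) _.
rewrite -size_cat -(size_iota 0 (chi (A :|: B))); apply: uniq_leq_size.
  rewrite cat_uniq !uniq_colors /= andbT; apply/hasPn=> c /colorsP [y yB <-].
  apply/colorsP=> -[x xA /eqP]; apply/negP; apply: gP (eAB x y xA yB);
  by rewrite inE ?xA ?yB ?orbT.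
move=> c; rewrite mem_cat mem_iota add0n => /orP [] /colorsP [x xS <-];
by apply: ltg; rewrite inE xS ?orbT.
Qed.

Lemma subset_setU_cases (A B S : {set T}) : S \subset A :|: B -> S != set0 ->
  [\/ S \subset A, S \subset B |
      [/\ S :&: A != set0, S :&: B != set0 & S = (S :&: A) :|: (S :&: B)]].
Proof.
move=> sSAB S0; have defS : S = (S :&: A) :|: (S :&: B).
  by rewrite -setIUr; apply/esym/setIidPl.
have [SA0|SA0] := eqVneq (S :&: A) set0.
  by apply: Or32; rewrite defS SA0 set0U subsetIr.
have [SB0|SB0] := eqVneq (S :&: B) set0; last exact: Or33.
by apply: Or31; rewrite defS SB0 setU0 subsetIr.
Qed.

Lemma cograph_on_subset S : cograph_on e S ->
  forall S', S' \subset S -> S' != set0 -> cograph_on e S'.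
Proof.
elim=> [x|A B _ _ dAB _ IHA _ IHB eAB|A B _ _ dAB _ IHA _ IHB eAB] S' sS' S'0.
- by move: sS'; rewrite subset1 (negbTE S'0) orbF => /eqP ->; apply: cg_single.
- case: (subset_setU_cases sS' S'0) => [/IHA|/IHB|[SA0 SB0 ->]]; try exact.
  apply: cg_union SA0 SB0 _ (IHA _ (subsetIr _ _) SA0) (IHB _ (subsetIr _ _) SB0) _.
    exact: disjointWl (subsetIr _ _) (disjointWr (subsetIr _ _) dAB).
  by move=> x y /setIP [_ xA] /setIP [_ yB]; apply: eAB.
- case: (subset_setU_cases sS' S'0) => [/IHA|/IHB|[SA0 SB0 ->]]; try exact.
  apply: cg_join SA0 SB0 _ (IHA _ (subsetIr _ _) SA0) (IHB _ (subsetIr _ _) SB0) _.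
    exact: disjointWl (subsetIr _ _) (disjointWr (subsetIr _ _) dAB).
  by move=> x y /setIP [_ xA] /setIP [_ yB]; apply: eAB.
Qed.

Definition greedy_on (g : T -> nat) (S : {set T}) :=
  proper_on g S /\ {in S &, forall v w, g w < g v ->
                                exists u, [/\ u \in S, e u v & g u = g w]}.

Definition closed_in (S A : {set T}) := {in S & A, forall u v, e u v -> u \in A}.

Lemma greedy_on_subset g S A : greedy_on g S -> A \subset S ->
  {in S & A & A, forall u v w, e u v -> g u = g w -> u \in A} -> greedy_on g A.
Proof.
move=> [gP gG] sAS clA; split=> [x y xA yA|v w vA wA ltwv].
  by apply: gP; apply: (subsetP sAS).
have [u [uS euv guw]] := gG v w (subsetP sAS v vA) (subsetP sAS w wA) ltwv.
by exists u; split=> //; apply: clA euv guw.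
Qed.

Lemma greedy_on_closed g S A : greedy_on g S -> A \subset S -> closed_in S A ->
  greedy_on g A.
Proof.
by move=> gG sAS clA; apply: greedy_on_subset gG sAS _ => u v w uS vA _ /clA ->.
Qed.

Lemma colors_greedy_closed g S A v : greedy_on g S -> A \subset S -> closed_in S A ->
  v \in A -> {in S, forall w, g w <= g v} -> {subset colors g S <= colors g A}.
Proof.
move=> [_ gG] sAS clA vA vmax c /colorsP [w wS <-]; apply/colorsP.
have vS := subsetP sAS v vA.
have [->|neq_wv] := eqVneq (g w) (g v); first by exists v.
have ltwv : g w < g v by rewrite ltn_neqAle neq_wv vmax.
have [u [uS euv <-]] := gG v w vS wS ltwv.
by exists u; first exact: clA euv.
Qed.

Lemma greedy_ncolors_le_chi S : cograph_on e S -> forall g, greedy_on g S ->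
  size (colors g S) <= chi S.
Proof.
elim=> [x|A B A0 B0 _ _ IHA _ IHB eAB|A B A0 B0 _ _ IHA _ IHB eAB] g gG.
- apply: leq_trans (size_undup _) _; rewrite size_image cards1.
  by apply: chi_on_gt0; apply/set0Pn; exists x; rewrite set11.
- have /set0Pn [a aA] := A0; have aAB : a \in A :|: B by rewrite inE aA.
  case: (arg_maxnP g aAB) => v vAB vmax.
  have from_side (C : {set T}) : C \subset A :|: B -> C != set0 ->
      closed_in (A :|: B) C -> v \in C ->
      (forall g, greedy_on g C -> size (colors g C) <= chi C) ->
    size (colors g (A :|: B)) <= chi (A :|: B).
    move=> sC C0 clC vC IHC.
    have sub := colors_greedy_closed gG sC clC vC vmax.
    apply: leq_trans (uniq_leq_size (uniq_colors _ _) sub) _.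
    exact: leq_trans (IHC _ (greedy_on_closed gG sC clC)) (chi_on_subset C0 sC).
  case/setUP: vAB => [vA|vB].
    apply: from_side vA IHA => [||u w]; [exact: subsetUl | exact: A0 |].
    by case/setUP=> // uB wA euw; move: (eAB w u wA uB); rewrite e_sym euw.
  apply: from_side vB IHB => [||u w]; [exact: subsetUr | exact: B0 |].
  by case/setUP=> // uA wB euw; move: (eAB u w uA wB); rewrite euw.
- have [gP _] := gG.
  have no_shared x y : x \in A -> y \in B -> g x != g y.
    by move=> xA yB; apply: gP (eAB x y xA yB); rewrite inE ?xA ?yB ?orbT.
  have gGA : greedy_on g A.
    apply: greedy_on_subset gG (subsetUl A B) _ => u v w /setUP [//|uB] _ wA _ guw.
    by move: (no_shared w u wA uB); rewrite guw eqxx.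
  have gGB : greedy_on g B.
    apply: greedy_on_subset gG (subsetUr A B) _ => u v w /setUP [uA|//] _ wB _ guw.
    by move: (no_shared u w uA wB); rewrite guw eqxx.
  apply: leq_trans (chi_on_join A0 B0 eAB).
  apply: leq_trans (leq_add (IHA g gGA) (IHB g gGB)).
  rewrite -size_cat; apply: uniq_leq_size (uniq_colors _ _) _ => c.
  case/colorsP=> x /setUP [xA|xB] <-; rewrite mem_cat; apply/orP;
    by [left; apply/colorsP; exists x | right; apply/colorsP; exists x].
Qed.

Lemma greedy_ncolors g S : cograph_on e S -> greedy_on g S -> S != set0 ->
  size (colors g S) = chi S.
Proof.
move=> cS gG S0; apply/eqP; rewrite eqn_leq greedy_ncolors_le_chi //.
exact: chi_on_le_colors gG.1.
Qed.

Lemma component_closed x : closed_in setT (component e x).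
Proof.
move=> u v _; rewrite !inE => xv euv; apply: connect_trans xv (connect1 _).
by rewrite e_sym.
Qed.

Section GreedyColoring.
Variable sigma : T -> nat.
Hypothesis sigma_greedy : greedy_coloring e sigma.

Lemma greedy_coloring_gt0 v : 0 < sigma v.
Proof. by have [s [_ [_ /(_ v) []]]] := sigma_greedy. Qed.

Lemma greedy_coloring_below v c : 0 < c < sigma v -> exists2 u, e u v & sigma u = c.
Proof.
move=> c_lt; have [s [_ [_ /(_ v) [_ _ /(_ c c_lt) /mapP [u]]]]] := sigma_greedy.
by rewrite mem_filter => /andP [/andP [_ euv] _] ->; exists u.
Qed.

Lemma greedy_coloring_proper : proper_on sigma setT.
Proof.
have [s [_ [s_all sP]]] := sigma_greedy.
have earlier x y : index x s < index y s -> e x y -> sigma x != sigma y.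
  move=> lt_xy exy; have [_ + _] := sP y; apply: contra => /eqP <-.
  by apply/mapP; exists x; rewrite // mem_filter lt_xy exy s_all.
move=> x y _ _ exy; case: (ltngtP (index x s) (index y s)) => [lt_xy|lt_yx|eq_xy].
- exact: earlier.
- by rewrite eq_sym earlier // e_sym.
- by move: exy; rewrite (index_inj x (s_all x) (s_all y) eq_xy) e_irr.
Qed.

Lemma greedy_coloring_greedy_on : greedy_on sigma setT.
Proof.
split=> [|v w _ _ ltwv]; first exact: greedy_coloring_proper.
have [u euv <-] : exists2 u, e u v & sigma u = sigma w.
  by apply: greedy_coloring_below; rewrite greedy_coloring_gt0 ltwv.
by exists u; rewrite in_setT.
Qed.

Lemma greedy_coloring_range V v : closed_in setT V -> v \in V ->
    {in V, forall w, sigma w <= sigma v} ->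
  forall c, (exists2 w, w \in V & sigma w = c) <-> 1 <= c <= sigma v.
Proof.
move=> clV vV vmax c; split=> [[w wV <-]|/andP [c_gt0]].
  by rewrite greedy_coloring_gt0 vmax.
rewrite leq_eqVlt => /predU1P [->|ltcv]; first by exists v.
have /greedy_coloring_below [u euv <-] : 0 < c < sigma v by rewrite c_gt0.
by exists u; first exact: clV (in_setT u) vV euv.
Qed.

End GreedyColoring.
End Cographs.

Theorem lemma4 (T : finType) (e : rel T) (hsym : symmetric e)
  (hirr : irreflexive e) (hco : cograph e) (sigma : T -> nat)
  (hgr : greedy_coloring e sigma) (V1 : {set T})
  (hV1 : exists x, V1 = component e x) :
  forall c, (exists2 v, v \in V1 & sigma v = c) <-> (1 <= c <= chi_on hirr V1).
Proof.
have [x0 ->] := hV1; set V := component e x0.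
have x0V : x0 \in V by rewrite inE connect0.
have V0 : V != set0 by apply/set0Pn; exists x0.
have clV : closed_in e setT V by apply: component_closed.
case: (arg_maxnP sigma x0V) => m mV mmax.
have range := greedy_coloring_range hgr clV mV mmax.
suff -> : chi_on hirr V = sigma m by [].
have gGV := greedy_on_closed (greedy_coloring_greedy_on hsym hirr hgr) (subsetT V) clV.
rewrite -(greedy_ncolors hsym hirr (cograph_on_subset hco (subsetT V) V0) gGV V0).
rewrite -(size_iota 1 (sigma m)); apply/perm_size/uniq_perm.
- exact: uniq_colors.
- exact: iota_uniq.
- by move=> c; rewrite mem_iota add1n ltnS; apply/colorsP/idP => /range.
Qed.
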